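(* Let $\mathcal{A}$ be a central S-ring over a finite group $G$, and let $m$ be an integer coprime to $|G|$. Then for every basic set $X$ of $\mathcal{A}$, the set $X^{(m)}=\{x^m : x\in X\}$ is again a basic set of $\mathcal{A}$ (so $\sigma_m(\mathcal{A})=\mathcal{A}$). Moreover, the $\mathbb{Z}$-linear map $\mathcal{A}\to\mathcal{A}$ determined by $\underline{X}\mapsto\underline{X^{(m)}}$ for all basic sets $X$ is a ring automorphism of $\mathcal{A}$.
   Context: For a finite group $G$ with identity $e$ and $X\subseteq G$, write $\underline{X}=\sum_{x\in X}x\in\mathbb{Z}G$. A subring $\mathcal{A}$ of the group ring $\mathbb{Z}G$ is an S-ring (Schur ring) over $G$ if there is a partition $\mathcal{S}(\mathcal{A})$ of $G$ such that (S1) $\{e\}\in\mathcal{S}(\mathcal{A})$; (S2) $X\in\mathcal{S}(\mathcal{A})\Rightarrow X^{-1}\in\mathcal{S}(\mathcal{A})$; (S3) $\mathcal{A}$ is the $\mathbb{Z}$-span of $\{\underline{X}: X\in\mathcal{S}(\mathcal{A})\}$. The elements of $\mathcal{S}(\mathcal{A})$ are the basic sets. An S-ring is central if it is contained in the center $\mathcal{Z}(\mathbb{Z}G)$ of $\mathbb{Z}G$. For an integer $m$ coprime to $|G|$, $\sigma_m:G\to G$, $x\mapsto x^m$, and for $X\subseteq G$, $X^{(m)}=\{x^m: x\in X\}$. *)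

From HB Require Import structures.
From mathcomp Require Import all_boot all_order all_fingroup all_algebra.
Set Implicit Arguments. Unset Strict Implicit. Unset Printing Implicit Defensive.
Import GRing.Theory Num.Theory.

(* The finite group G is the full carrier of a finGroupType gT.
   The group ring ZG is modelled as {ffun gT -> int}: a = sum_g a(g) g. *)

Local Open Scope ring_scope.

Section GroupRing.
Variable gT : finGroupType.

Local Notation grring := {ffun gT -> int}.

Definition grmul (a b : grring) : grring :=
  [ffun z => \sum_(x : gT) a x * b ((x^-1) * z)%g].

Definition uline (X : {set gT}) : grring := [ffun z => ((z \in X) : nat)%:Z].

Definition grone : grring := uline [set 1%g].

Definition inSpan (P : {set {set gT}}) (a : grring) : Prop :=
  exists c : {set gT} -> int, a = \sum_(X in P) uline X *~ c X.

(* S-ring over gT with basic sets P (conditions S1, S2, S3; the span is a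
   subring of ZG: it is an additive subgroup by construction, contains
   1 = uline [set 1] by S1, and we require closure under multiplication). *)
Definition is_Sring (P : {set {set gT}}) : Prop :=
  [/\ partition P [set: gT],
      [set 1%g] \in P,
      (forall X, X \in P -> (X^-1)%g \in P) &
      (forall a b, inSpan P a -> inSpan P b -> inSpan P (grmul a b))].

Definition central_Sring (P : {set {set gT}}) : Prop :=
  forall a, inSpan P a -> forall b : grring, grmul a b = grmul b a.

Definition gexpz (x : gT) (m : int) : gT :=
  match m with
  | Posz n => (x ^+ n)%g
  | Negz n => (x ^+ n.+1)^-1%g
  end.

Definition setexpz (X : {set gT}) (m : int) : {set gT} :=
  [set gexpz x m | x in X].

End GroupRing.

From HB Require Import structures.
From mathcomp Require Import all_boot all_order all_fingroup all_algebra all_solvable.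
Import GRing.Theory Num.Theory.
Set Implicit Arguments. Unset Strict Implicit. Unset Printing Implicit Defensive.
Local Open Scope ring_scope.

(* For a prime p not dividing |G|, rotation of p-tuples is an action of a
   p-group, and it sends a tuple with product g to one whose product is a
   conjugate of g.  The elements of a central S-ring are class functions, so
   counting the tuples of a basic set X with product in one conjugacy class
   and discarding the orbits of size p gives the Frobenius congruence
   X^p(g^p) = [g \in X] (mod p).  As the coefficients of X^p are constant on
   basic sets, X^(p) is a union of basic sets, hence a basic set.  For
   p > |G| the same congruence, applied to (XY)^p = X^p Y^p, whose
   coefficients are all below p, gives X^(p) Y^(p) = (XY)^(p).  Both
   properties are stable under products of exponents, and on G every
   exponent coprime to |G| agrees with a product of primes larger than |G|. *)

Notation setexpn X k := [set x ^+ k | x in X]%g.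

Lemma Posz_sum I (r : seq I) (Pr : pred I) (F : I -> nat) :
  Posz (\sum_(i <- r | Pr i) F i)%N = \sum_(i <- r | Pr i) (F i)%:Z.
Proof. exact: (big_morph Posz PoszD (erefl 0%:Z)). Qed.

Lemma eqn_modMl_coprime c a b p :
  coprime c p -> (c * a = c * b %[mod p])%N -> (a = b %[mod p])%N.
Proof.
wlog le_ab : a b / (a <= b)%N.
  move=> hwlog cop; case: (leqP a b) => [|/ltnW] le; first exact: hwlog.
  by move/esym/(hwlog _ _ le cop)/esym.
move=> cop /eqP; rewrite eq_sym eqn_mod_dvd ?leq_mul2l ?le_ab ?orbT // -mulnBr.
by rewrite Gauss_dvdr 1?coprime_sym // => dvd; apply/eqP; rewrite eq_sym eqn_mod_dvd.
Qed.

Lemma coprime_large_prime_factors n e : coprime n e ->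
  exists q, [/\ (0 < q)%N, (q = e %[mod n])%N &
                forall l, prime l -> (l %| q)%N -> (n < l)%N].
Proof.
(* [K] collects the primes up to n not dividing e, so that no such prime
   divides e + n * K: a substitute for Dirichlet's theorem. *)
move=> co_ne; pose K := (\prod_(l < n.+1 | prime l && ~~ (l %| e)) l)%N.
have K_gt0 : (0 < K)%N by apply: prodn_cond_gt0 => l /andP[/prime_gt0].
have K_small_primes l : prime l -> (l <= n)%N -> ~~ (l %| e)%N -> (l %| K)%N.
  move=> l_pr le_ln l_e.
  by rewrite /K (bigD1 (Ordinal (le_ln : (l < n.+1)%N))) ?l_pr ?dvdn_mulr.
have K_e l : prime l -> (l %| K)%N -> ~~ (l %| e)%N.
  move=> l_pr; rewrite /K Euclid_dvd_prod // big_has_cond.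
  case/hasP=> i _ /andP[/andP[i_pr i_e]].
  by rewrite dvdn_prime2 // => /eqP->.
exists (e + n * K)%N; split.
- case: (posnP e) => [e0|e_gt0]; last by rewrite addn_gt0 e_gt0.
  by move: co_ne; rewrite e0 /coprime gcdn0 => /eqP->; rewrite mul1n.
- by rewrite addnC mulnC modnMDl.
move=> l l_pr; rewrite ltnNge; apply: contraTN => le_ln.
case: (boolP (l %| e)%N) => l_e; last first.
  by rewrite dvdn_addl ?(negPf l_e) // dvdn_mull ?K_small_primes.
rewrite dvdn_addr // Euclid_dvdM // negb_or; apply/andP; split.
  apply: contraL co_ne => l_n; apply/negP => /eqP gcd1.
  by have := dvdn_gcd l n e; rewrite l_n l_e gcd1 dvdn1 => /eqP l1; rewrite l1 in l_pr.
by apply: contraL l_e; apply: K_e.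
Qed.

Section PartitionCoarsening.
Variables (T : finType) (P : {set {set T}}).

Lemma partition_coarsening_eq (Q : {set {set T}}) (D : {set T}) :
    partition P D -> partition Q D -> (#|P| <= #|Q|)%N ->
    (forall B x, B \in Q -> x \in B -> pblock P x \subset B) ->
  Q = P.
Proof.
move=> partP /and3P[/eqP coverQ tiQ nQ] lePQ coarse.
have [/eqP coverP tiP _] := and3P partP.
have coverPQ x B : B \in Q -> x \in B -> x \in cover P.
  by move=> QB Bx; rewrite coverP -coverQ; apply/bigcupP; exists B.
pose g (Y : {set T}) := if [pick y in Y] is Some y then pblock Q y else set0.
have gE B x : B \in Q -> x \in B -> g (pblock P x) = B.
  move=> QB Bx; rewrite /g; case: pickP => [y Py | /(_ x)]; last first.
    by rewrite mem_pblock (coverPQ x B).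
  exact: (def_pblock tiQ QB (subsetP (coarse B x QB Bx) y Py)).
have QgP : Q \subset g @: P.
  apply/subsetP => B QB; have /set0Pn[x Bx] : B != set0 by apply: contraNneq nQ => <-.
  by apply/imsetP; exists (pblock P x); rewrite ?(gE B) // pblock_mem ?(coverPQ x B).
have /imset_injP g_inj : #|g @: P| == #|P|.
  by rewrite eqn_leq leq_imset_card (leq_trans lePQ (subset_leq_card QgP)).
apply/eqP; rewrite eqEcard lePQ andbT; apply/subsetP => B QB.
have /set0Pn[x Bx] : B != set0 by apply: contraNneq nQ => <-.
suff -> : B = pblock P x by rewrite pblock_mem ?(coverPQ x B).
apply/eqP; rewrite eq_sym eqEsubset coarse //=; apply/subsetP => y By.
have Py := pblock_mem (coverPQ y B QB By); have Px := pblock_mem (coverPQ x B QB Bx).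
by rewrite -(g_inj _ _ Py Px) ?(gE B) // mem_pblock (coverPQ y B).
Qed.

Lemma imset_block (f : T -> T) : partition P [set: T] -> injective f ->
    (forall X x y, X \in P -> x \in f @: X -> y \in pblock P x -> y \in f @: X) ->
  forall X, X \in P -> f @: X \in P.
Proof.
move=> partP f_inj f_union X PX.
have fT : f @: [set: T] = [set: T].
  by apply/eqP; rewrite eqEcard subsetT (card_imset _ f_inj) leqnn.
suff <- : [set f @: B | B : {set T} in P] = P by apply: imset_f.
apply: (partition_coarsening_eq partP).
- by rewrite -fT imset_partition.
- by rewrite (card_imset _ (imset_inj f_inj)).
by move=> _ x /imsetP[Y PY ->] xY; apply/subsetP => y; apply: f_union.
Qed.

End PartitionCoarsening.

Section Powers.
Variable gT : finGroupType.
Implicit Types (x h : gT) (X : {set gT}).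

Lemma expg_cardT x : (x ^+ #|gT|)%g = 1%g.
Proof. by rewrite -cardsT (expg_cardG (G := [set: gT]%G)) ?inE. Qed.

Lemma gexpz_expg m : coprime #|gT| `|m| ->
  exists2 e, coprime #|gT| e & forall x, gexpz x m = (x ^+ e)%g.
Proof.
have n_gt0 : (0 < #|gT|)%N by apply/card_gt0P; exists 1%g.
case: m => k /= co_k; first by exists k.
exists (k.+1 * #|gT|.-1)%N => [|x]; first by rewrite coprimeMr co_k coprime_sym coprimePn.
apply: (mulIg (x ^+ k.+1)%g); rewrite mulVg expgM -expgSr prednK //.
by rewrite -expgM mulnC expgM expg_cardT expg1n.
Qed.

Section Coprime.
Variable k : nat.
Hypothesis coGk : coprime #|gT| k.
Local Notation k' := (expg_invn [set: gT] k).

Lemma expgK_coprime x : (x ^+ k ^+ k')%g = x.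
Proof. by apply: expgK; rewrite ?cardsT ?inE. Qed.

Lemma expg_inj_coprime : injective (fun x => x ^+ k)%g.
Proof. exact: (@can_inj _ _ _ (fun x => x ^+ k')%g expgK_coprime). Qed.

Lemma expgKV_coprime x : (x ^+ k' ^+ k)%g = x.
Proof. by rewrite -expgM mulnC expgM expgK_coprime. Qed.

Lemma mem_setexp X h : (h \in setexpn X k) = (h ^+ k' \in X)%g.
Proof.
apply/imsetP/idP => [[x Xx ->]|Xh]; first by rewrite expgK_coprime.
by exists (h ^+ k')%g; rewrite ?expgKV_coprime.
Qed.

End Coprime.

Lemma card_preim_class (T : finType) (A : {set T}) (f : T -> gT) h :
    (forall y, #|[set a in A | f a == h ^ y]%g| = #|[set a in A | f a == h]|) ->
  #|[set a in A | f a \in h ^: [set: gT]]%g| =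
  (#|h ^: [set: gT]|%g * #|[set a in A | f a == h]|)%N.
Proof.
move=> fibre_conj; rewrite -sum1_card (partition_big f (mem (h ^: [set: gT])%g)) /=.
  rewrite -sum_nat_const; apply: eq_bigr => _ /imsetP[y _ ->].
  rewrite -(fibre_conj y) -sum1_card; apply: eq_bigl => a; rewrite !inE.
  by case: eqP => [->|_]; rewrite ?andbF ?andbT // memJ_class ?inE ?andbT.
by move=> a; rewrite inE => /andP[].
Qed.

End Powers.

Section GroupRing.
Variable gT : finGroupType.
Implicit Types X Y : {set gT}.
Local Notation ZG := {ffun gT -> int}.

Lemma grmulE (a b : ZG) z : grmul a b z = \sum_x a x * b (x^-1 * z)%g.
Proof. by rewrite ffunE. Qed.

Lemma ulineE X z : uline X z = (z \in X)%:Z.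
Proof. by rewrite ffunE. Qed.

Lemma grmulDl (a1 a2 b : ZG) : grmul (a1 + a2) b = grmul a1 b + grmul a2 b.
Proof.
apply/ffunP=> z; rewrite grmulE [RHS]ffunE !grmulE -big_split.
by apply: eq_bigr => x _; rewrite ffunE mulrDl.
Qed.

Lemma grmulDr (a b1 b2 : ZG) : grmul a (b1 + b2) = grmul a b1 + grmul a b2.
Proof.
apply/ffunP=> z; rewrite grmulE [RHS]ffunE !grmulE -big_split.
by apply: eq_bigr => x _; rewrite ffunE mulrDr.
Qed.

Lemma grmulMzl (a b : ZG) k : grmul (a *~ k) b = grmul a b *~ k.
Proof.
apply/ffunP=> z; rewrite grmulE [RHS]ffunMzE grmulE mulrz_suml.
by apply: eq_bigr => x _; rewrite ffunMzE mulrzAl.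
Qed.

Lemma grmulMzr (a b : ZG) k : grmul a (b *~ k) = grmul a b *~ k.
Proof.
apply/ffunP=> z; rewrite grmulE [RHS]ffunMzE grmulE mulrz_suml.
by apply: eq_bigr => x _; rewrite ffunMzE mulrzAr.
Qed.

Lemma grmul0l (b : ZG) : grmul 0 b = 0.
Proof. by rewrite -(mulr0z 0) grmulMzl mulr0z. Qed.

Lemma grmul0r (a : ZG) : grmul a 0 = 0.
Proof. by rewrite -(mulr0z 0) grmulMzr mulr0z. Qed.

Lemma grmul1l (a : ZG) : grmul (grone gT) a = a.
Proof.
apply/ffunP=> z; rewrite grmulE (bigD1 1%g) //= big1 => [|x /negPf x_neq1].
  by rewrite ulineE set11 mul1r invg1 mul1g addr0.
by rewrite ulineE inE x_neq1 mul0r.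
Qed.

Lemma grmul1r (a : ZG) : grmul a (grone gT) = a.
Proof.
apply/ffunP=> z; rewrite grmulE (bigD1 z) //= big1 => [|x x_neq_z].
  by rewrite ulineE mulVg set11 mulr1 addr0.
rewrite ulineE inE (_ : (x^-1 * z == 1)%g = false) ?mulr0 //.
by apply: contraNF x_neq_z; rewrite -eq_mulVg1 eq_sym.
Qed.

Lemma grmulA (a b c : ZG) : grmul (grmul a b) c = grmul a (grmul b c).
Proof.
apply/ffunP=> z; rewrite !grmulE.
under eq_bigr do rewrite grmulE mulr_suml.
rewrite exchange_big /=; apply: eq_bigr => x _.
rewrite grmulE mulr_sumr (reindex_inj (mulgI x)) /=.
by apply: eq_bigr => u _; rewrite mulKg invMg mulgA mulrA.
Qed.

Definition grexp (a : ZG) k := iter k (grmul a) (grone gT).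

Lemma grexpS a k : grexp a k.+1 = grmul a (grexp a k).
Proof. by []. Qed.

Section Commuting.
Variables a b : ZG.
Hypothesis ab_comm : grmul a b = grmul b a.

Lemma grexp_comm k : grmul (grexp a k) b = grmul b (grexp a k).
Proof.
elim: k => [|k IHk]; first by rewrite grmul1l grmul1r.
by rewrite grexpS grmulA IHk -grmulA ab_comm grmulA.
Qed.

Lemma grexpMn_comm k : grexp (grmul a b) k = grmul (grexp a k) (grexp b k).
Proof.
elim: k => [|k IHk]; first by rewrite grmul1l.
rewrite !grexpS IHk grmulA -[grmul b (grmul _ _)]grmulA -grexp_comm.
by rewrite !grmulA.
Qed.

End Commuting.

Lemma central_conjg (a : ZG) :
  (forall b, grmul a b = grmul b a) -> forall x y, a (x ^ y)%g = a x.
Proof.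
move=> a_central x y.
have := congr1 (fun c : ZG => c (x * y)%g) (a_central (uline [set y])).
rewrite !grmulE (bigD1 x) //= big1 => [|u u_neq_x]; last first.
  rewrite ulineE inE (_ : (u^-1 * (x * y) == y)%g = false) ?mulr0 //.
  apply: contraNF u_neq_x => /eqP; rewrite mulgA -{2}[y]mul1g.
  by move=> /mulIg/eqP; rewrite -eq_mulVg1.
rewrite (bigD1 y) //= big1 => [|u /negPf u_neq_y]; last first.
  by rewrite ulineE inE u_neq_y mul0r.
by rewrite !ulineE !inE mulKg eqxx mulr1 mul1r !addr0 conjgE mulgA.
Qed.

Section Span.
Variable P : {set {set gT}}.

Lemma span_ind (Q : ZG -> Prop) : Q 0 ->
  (forall a b, Q a -> Q b -> Q (a + b)) ->
  (forall X k, X \in P -> Q (uline X *~ k)) ->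
  forall a, inSpan P a -> Q a.
Proof. by move=> Q0 QD QX _ [c ->]; elim/big_ind: _ => // X XP; apply: QX. Qed.

Lemma span0 : inSpan P 0.
Proof. by exists (fun _ => 0); rewrite big1 // => X _; rewrite mulr0z. Qed.

Lemma spanD a b : inSpan P a -> inSpan P b -> inSpan P (a + b).
Proof.
case=> c1 -> [c2 ->]; exists (fun X => c1 X + c2 X); rewrite -big_split /=.
by apply: eq_bigr => X _; rewrite mulrzDr.
Qed.

Lemma spanMz a k : inSpan P a -> inSpan P (a *~ k).
Proof.
case=> c ->; exists (fun X => c X * k); rewrite mulrz_suml.
by apply: eq_bigr => X _; rewrite mulrzA.
Qed.

Lemma span_uline X : X \in P -> inSpan P (uline X).
Proof.
move=> XP; exists (fun Y => (Y == X)%:Z).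
rewrite (bigD1 X) //= eqxx mulr1z big1 ?addr0 // => Y /andP[_ /negPf ->].
by rewrite mulr0z.
Qed.

Lemma span_const_block a Y h1 h2 : partition P [set: gT] -> inSpan P a ->
  Y \in P -> h1 \in Y -> h2 \in Y -> a h1 = a h2.
Proof.
move=> /and3P[_ tiP _] Pa YP h1Y h2Y; move: a Pa; apply: span_ind.
- by rewrite !ffunE.
- by move=> a1 a2 e1 e2; rewrite !ffunE e1 e2.
move=> X k XP; rewrite !ffunMzE !ulineE.
suff -> : (h1 \in X) = (h2 \in X) by [].
by apply/idP/idP => hX; rewrite -(def_pblock tiP XP hX) (def_pblock tiP YP).
Qed.

End Span.

Section Counting.
Variables (E : finType) (D : {set E}) (pi : E -> gT).

Definition fibre_card z := #|[set e in D | pi e == z]|.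

Definition tuple_prod k (t : {ffun 'I_k -> E}) := (\prod_(i < k) pi (t i))%g.

Definition D_tuples k := [set t : {ffun 'I_k -> E} | [forall i, t i \in D]].

Definition tuples_with_prod k g := [set t in D_tuples k | tuple_prod t == g].

Definition ffun_cons k (u : E * {ffun 'I_k -> E}) : {ffun 'I_k.+1 -> E} :=
  [ffun i => if unlift ord0 i is Some j then u.2 j else u.1].

Definition ffun_uncons k (t : {ffun 'I_k.+1 -> E}) :=
  (t ord0, [ffun j => t (lift ord0 j)]).

Lemma ffun_cons0 k (u : E * {ffun 'I_k -> E}) : ffun_cons u ord0 = u.1.
Proof. by rewrite ffunE unlift_none. Qed.

Lemma ffun_consS k (u : E * {ffun 'I_k -> E}) j : ffun_cons u (lift ord0 j) = u.2 j.
Proof. by rewrite ffunE liftK. Qed.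

Lemma ffun_consK k : cancel (@ffun_cons k) (@ffun_uncons k).
Proof.
case=> e t; rewrite /ffun_uncons ffun_cons0; congr (_, _).
by apply/ffunP=> j; rewrite ffunE ffun_consS.
Qed.

Lemma ffun_unconsK k : cancel (@ffun_uncons k) (@ffun_cons k).
Proof.
by move=> t; apply/ffunP=> i; rewrite ffunE; case: unliftP => [j|] ->; rewrite ?ffunE.
Qed.

Lemma mem_tuples_cons k g e (t : {ffun 'I_k -> E}) :
  (ffun_cons (e, t) \in tuples_with_prod k.+1 g) =
  (e \in D) && (t \in tuples_with_prod k ((pi e)^-1 * g)%g).
Proof.
rewrite !inE /tuple_prod big_ord_recl ffun_cons0 /=.
under eq_bigr do rewrite ffun_consS.
have -> : [forall i, ffun_cons (e, t) i \in D] = (e \in D) && [forall i, t i \in D].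
  apply/forallP/andP => [Dt|[De /forallP Dt] i].
    split; first by have := Dt ord0; rewrite ffun_cons0.
    by apply/forallP=> j; have := Dt (lift ord0 j); rewrite ffun_consS.
  by case: (unliftP ord0 i) => [j|] ->; rewrite ?ffun_cons0 ?ffun_consS.
by rewrite -andbA -(inj_eq (mulgI (pi e)^-1%g)) mulKg.
Qed.

Lemma card_tuples_with_prodS k g :
  #|tuples_with_prod k.+1 g| =
  (\sum_x fibre_card x * #|tuples_with_prod k (x^-1 * g)%g|)%N.
Proof.
rewrite -sum1_card big_mkcond /= (reindex (@ffun_cons k)); last first.
  by apply: onW_bij; exists (@ffun_uncons k); [apply: ffun_consK | apply: ffun_unconsK].
rewrite -(pair_bigA _ (fun e t => if ffun_cons (e, t) \in _ then 1 else 0)%N) /=.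
transitivity (\sum_(e in D) #|tuples_with_prod k ((pi e)^-1 * g)%g|)%N.
  rewrite [RHS]big_mkcond; apply: eq_bigr => e _.
  under eq_bigr do rewrite mem_tuples_cons.
  by case: (e \in D) => /=; [rewrite -sum1_card [RHS]big_mkcond | rewrite big1].
rewrite (partition_big pi xpredT) //=; apply: eq_bigr => x _.
rewrite -sum_nat_const; apply: eq_big => [e|e /andP[_ /eqP->]] //.
by rewrite inE.
Qed.

Lemma grexp_fibre_card (c : ZG) : (forall z, c z = fibre_card z) ->
  forall k g, grexp c k g = #|tuples_with_prod k g|.
Proof.
move=> cE; elim=> [|k IHk] g.
  have -> : tuples_with_prod 0 g = if g == 1%g then setT else set0.
    apply/setP=> t; rewrite !inE /tuple_prod big_ord0 eq_sym.
    by case: eqP => _ /=; rewrite !inE ?andbT ?andbF //; apply/forallP => -[].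
  by rewrite /= ulineE inE; case: eqP; rewrite ?cardsT ?card_ffun ?card_ord ?cards0.
rewrite grexpS grmulE card_tuples_with_prodS Posz_sum; apply: eq_bigr => x _.
by rewrite cE IHk PoszM.
Qed.

Definition ffun_rot k (t : {ffun 'I_k -> E}) := [ffun i => t (ordS i)].

Lemma ffun_rot_inj k : injective (@ffun_rot k).
Proof.
move=> t1 t2 /ffunP eq_rot; apply/ffunP=> i.
by have := eq_rot (ord_pred i); rewrite !ffunE ord_predK.
Qed.

Definition rot_perm k : {perm {ffun 'I_k -> E}} := perm (@ffun_rot_inj k).

Lemma val_iter_ordS k j (i : 'I_k) : val (iter j (@ordS k) i) = ((i + j) %% k)%N.
Proof.
elim: j => [|j IHj] /=; first by rewrite addn0 modn_small.
by rewrite IHj -addn1 modnDml -addnA addn1.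
Qed.

Lemma rot_permX k j t i : (rot_perm k ^+ j)%g t i = t (iter j (@ordS k) i).
Proof.
rewrite permX; elim: j i => [|j IHj] i //=.
by rewrite permE ffunE IHj -iterSr.
Qed.

Lemma rot_perm_order k : (rot_perm k ^+ k)%g = 1%g.
Proof.
apply/permP=> t; apply/ffunP=> i; rewrite rot_permX perm1; congr (t _).
by apply: val_inj; rewrite val_iter_ordS modnDr modn_small.
Qed.

Lemma rot_perm_fixed k (t : {ffun 'I_k.+1 -> E}) :
  rot_perm k.+1 t = t -> t = [ffun=> t ord0].
Proof.
move=> t_fixed; apply/ffunP=> i; rewrite ffunE.
have -> : i = iter i (@ordS k.+1) ord0.
  by apply: val_inj; rewrite val_iter_ordS add0n modn_small.
by elim: (val i) => //= j <-; rewrite -[in RHS]t_fixed permE ffunE.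
Qed.

Lemma D_tuples_rot k t : (rot_perm k t \in D_tuples k) = (t \in D_tuples k).
Proof.
rewrite permE !inE; apply/forallP/forallP => Dt i; last by rewrite ffunE.
by have := Dt (ord_pred i); rewrite ffunE ord_predK.
Qed.

Lemma tuple_prod_rot k (t : {ffun 'I_k.+1 -> E}) :
  tuple_prod (rot_perm k.+1 t) = (tuple_prod t ^ pi (t ord0))%g.
Proof.
rewrite permE /tuple_prod big_ord_recr big_ord_recl /= !ffunE conjgE.
have -> : ordS (@ord_max k) = ord0 by apply: val_inj; rewrite /= modnn.
rewrite -mulgA mulKg; congr (_ * _)%g; apply: eq_bigr => i _.
by rewrite ffunE; congr (pi (t _)); apply: val_inj; rewrite /= modn_small ?ltnS.
Qed.

Lemma tuple_prod_const k e :
  tuple_prod ([ffun=> e] : {ffun 'I_k -> E}) = (pi e ^+ k)%g.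
Proof.
rewrite /tuple_prod (eq_bigr (fun=> pi e)) => [|i _]; last by rewrite ffunE.
by rewrite prodg_const card_ord.
Qed.

Lemma fibre_card_expg k x : coprime #|gT| k ->
  #|[set e in D | pi e ^+ k == x ^+ k]%g| = fibre_card x.
Proof.
by move=> coGk; apply: eq_card => e; rewrite !inE (inj_eq (expg_inj_coprime coGk)).
Qed.

Section Rotation.
Variables (k : nat) (A : {set gT}).
Local Notation S := [set t in D_tuples k.+1 | tuple_prod t \in A].

Lemma rot_perm_acts : (forall h y, ((h ^ y)%g \in A) = (h \in A)) ->
  [acts <[rot_perm k.+1]>, on S | 'P]%g.
Proof.
move=> A_conj; rewrite cycle_subG; apply/astabsP => t.
rewrite /aperm !in_set tuple_prod_rot A_conj; congr (_ && _).
by have := D_tuples_rot t; rewrite !inE.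
Qed.

Lemma rot_perm_fixed_prod_in :
  S :&: 'Fix_'P[rot_perm k.+1]%g =
  [set [ffun=> e] | e in [set e in D | pi e ^+ k.+1 \in A]%g].
Proof.
apply/setP=> t; rewrite in_setI; apply/andP/imsetP => [[St /afix1P]|[e]].
  move=> /rot_perm_fixed t_const.
  move: St; rewrite t_const !inE tuple_prod_const => /andP[/forallP Dt At].
  by exists (t ord0); rewrite // inE At andbT; have := Dt ord0; rewrite ffunE.
rewrite inE => /andP[De Ae] ->; split.
  by rewrite !inE tuple_prod_const Ae andbT; apply/forallP=> i; rewrite ffunE.
by apply/afix1P; rewrite /= /aperm permE; apply/ffunP=> i; rewrite !ffunE.
Qed.

End Rotation.

Lemma tuples_with_prod_congr p w : prime p -> coprime #|gT| p ->
    (forall h y, #|tuples_with_prod p (h ^ y)%g| = #|tuples_with_prod p h|) ->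
    (forall h y, fibre_card (h ^ y)%g = fibre_card h) ->
  (#|tuples_with_prod p (w ^+ p)%g| = fibre_card w %[mod p])%N.
Proof.
(* Count both sides of the orbit congruence for the rotation action on the
   tuples with product in the class C of w^p; the fixed points are the
   constant tuples, and both counts are #|C| times a fibre size. *)
move=> p_pr coGp tuples_conj fibre_conj.
have [k Dp] : exists k, p = k.+1 by exists p.-1; rewrite prednK ?prime_gt0.
subst p; set C := ((w ^+ k.+1) ^: [set: gT])%g.
have C_conj h y : ((h ^ y)%g \in C) = (h \in C).
  by apply: class_transl; rewrite memJ_class ?inE.
have coCp : coprime #|C| k.+1.
  by apply: coprime_dvdl coGp; rewrite -index_cent1 -cardsT dvdn_indexg.
have rot_pgroup : ((k.+1).-group <[rot_perm k.+1]>)%g.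
  by apply: pnat_dvd (pnat_id p_pr); rewrite order_dvdn rot_perm_order.
have := pgroup_fix_mod rot_pgroup (rot_perm_acts k C_conj).
rewrite afix_cycle rot_perm_fixed_prod_in card_imset => [|e1 e2 /ffunP/(_ ord0)]; last first.
  by rewrite !ffunE.
rewrite /C (card_preim_class (tuples_conj _)) card_preim_class => [|y].
  by rewrite fibre_card_expg //; apply: eqn_modMl_coprime.
by rewrite conjXg !fibre_card_expg.
Qed.

End Counting.

Lemma fibre_card_id X z : fibre_card X id z = (z \in X).
Proof.
rewrite /fibre_card (_ : [set e in X | id e == z] = X :&: [set z]); last first.
  by apply/setP=> e; rewrite !inE.
case: (boolP (z \in X)) => Xz; first by rewrite (setIidPr _) ?sub1set ?cards1.
by rewrite (disjoint_setI0 _) ?cards0 // disjoint_sym disjoints1.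
Qed.

Lemma fibre_card_mulg X Y z :
  fibre_card (setX X Y) (fun e => e.1 * e.2)%g z = #|[set x in X | x^-1 * z \in Y]%g|.
Proof.
rewrite /fibre_card -(@card_imset _ _ (fun x => (x, x^-1 * z))%g) => [|x1 x2 [] //].
apply: eq_card => -[x y]; rewrite !inE /=.
apply/andP/imsetP => [[/andP[Xx Yy] /eqP <-]|[x' + [-> ->]]].
  by exists x; rewrite ?inE ?mulKg ?Xx ?Yy.
by rewrite inE => /andP[Xx' Yx']; rewrite Xx' Yx' mulKVg.
Qed.

Lemma card_set_mulg_sum X Y z :
  #|[set x in X | x^-1 * z \in Y]%g| = (\sum_(x : gT) (x \in X) * ((x^-1 * z)%g \in Y))%N.
Proof.
rewrite -sum1_card big_mkcond; apply: eq_bigr => x _; rewrite inE.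
by case: (x \in X); case: (_ \in Y).
Qed.

Lemma grmul_uline X Y z :
  grmul (uline X) (uline Y) z = #|[set x in X | x^-1 * z \in Y]%g|.
Proof.
rewrite grmulE card_set_mulg_sum Posz_sum.
by apply: eq_bigr => x _; rewrite !ulineE PoszM.
Qed.


Section SigmaMap.
Variable k : nat.
Hypothesis coGk : coprime #|gT| k.

(* The Z-linear map extending [uline X |-> uline (setexpn X k)]. *)
Definition sigma_map (a : ZG) : ZG := [ffun z => a (z ^+ expg_invn [set: gT] k)%g].

Lemma sigma_mapD a b : sigma_map (a + b) = sigma_map a + sigma_map b.
Proof. by apply/ffunP=> z; rewrite !ffunE. Qed.

Lemma sigma_mapMz a n : sigma_map (a *~ n) = sigma_map a *~ n.
Proof. by apply/ffunP=> z; rewrite ffunMzE !ffunE ffunMzE. Qed.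

Lemma sigma_map0 : sigma_map 0 = 0.
Proof. by rewrite -(mulr0z 0) sigma_mapMz mulr0z. Qed.

Lemma sigma_map_uline X : sigma_map (uline X) = uline (setexpn X k).
Proof. by apply/ffunP=> z; rewrite ffunE !ulineE mem_setexp. Qed.

Lemma sigma_map_grone : sigma_map (grone gT) = grone gT.
Proof. by rewrite sigma_map_uline imset_set1 expg1n. Qed.

Lemma sigma_map_inj : injective sigma_map.
Proof.
move=> a b /ffunP eq_ab; apply/ffunP=> z.
by have := eq_ab (z ^+ k)%g; rewrite !ffunE expgK_coprime.
Qed.

End SigmaMap.

Section SRing.
Variable P : {set {set gT}}.
Hypotheses (P_Sring : is_Sring P) (P_central : central_Sring P).

Lemma partition_basic : partition P [set: gT].
Proof. by case: P_Sring. Qed.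

Lemma spanM a b : inSpan P a -> inSpan P b -> inSpan P (grmul a b).
Proof. by case: P_Sring => _ _ _; apply. Qed.

Lemma span_grone : inSpan P (grone gT).
Proof. by apply: span_uline; case: P_Sring. Qed.

Lemma span_grexp a k : inSpan P a -> inSpan P (grexp a k).
Proof. by move=> Pa; elim: k => [|k IHk]; [apply: span_grone | apply: spanM]. Qed.

Lemma span_conjg a x y : inSpan P a -> a (x ^ y)%g = a x.
Proof. by move=> Pa; apply: central_conjg => b; apply: P_central. Qed.

Lemma span_tuples_congr (E : finType) (D : {set E}) (pi : E -> gT) c p w :
    prime p -> coprime #|gT| p -> inSpan P c -> (forall z, c z = fibre_card D pi z) ->
  (#|tuples_with_prod D pi p (w ^+ p)%g| = fibre_card D pi w %[mod p])%N.
Proof.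
move=> p_pr coGp Pc cE; apply: tuples_with_prod_congr => // h y.
  by have := span_conjg h y (span_grexp p Pc); rewrite !(grexp_fibre_card cE) => -[].
by have := span_conjg h y Pc; rewrite !cE => -[].
Qed.

Lemma uline_fibre_card X z : uline X z = fibre_card X id z.
Proof. by rewrite ulineE fibre_card_id. Qed.

Section PrimeExponent.
Variable p : nat.
Hypotheses (p_pr : prime p) (coGp : coprime #|gT| p).
Local Notation p' := (expg_invn [set: gT] p).

Lemma tuples_uline_congr X h : X \in P ->
  (#|tuples_with_prod X id p h| = (h ^+ p' \in X)%g %[mod p])%N.
Proof.
move=> PX; rewrite -fibre_card_id -{1}(expgKV_coprime coGp h).
exact: span_tuples_congr (span_uline PX) (uline_fibre_card X).
Qed.

Lemma setexp_prime_basic X : X \in P -> setexpn X p \in P.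
Proof.
apply: (imset_block partition_basic (expg_inj_coprime coGp)) => {}X h h' PX.
have cover_h : h \in cover P by rewrite (cover_partition partition_basic) inE.
have Ph := pblock_mem cover_h; have hPh : h \in pblock P h by rewrite mem_pblock.
move=> Xh; rewrite !mem_setexp // => h'Ph; move: Xh; rewrite !mem_setexp // => Xh.
have := span_const_block partition_basic (span_grexp p (span_uline PX)) Ph hPh h'Ph.
rewrite !(grexp_fibre_card (uline_fibre_card X)).
move=> [eq_card]; have := tuples_uline_congr h' PX.
rewrite -eq_card tuples_uline_congr // Xh; case: (_ \in X) => //.
by rewrite mod0n modn_small ?prime_gt1.
Qed.

Hypothesis ltGp : (#|gT| < p)%N.

Lemma setexp_prime_grmul X Y z : X \in P -> Y \in P ->
  grmul (uline (setexpn X p)) (uline (setexpn Y p)) (z ^+ p)%g =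
  grmul (uline X) (uline Y) z.
Proof.
move=> PX PY.
have XY_fibre w :
    grmul (uline X) (uline Y) w = fibre_card (setX X Y) (fun e => e.1 * e.2)%g w.
  by rewrite grmul_uline fibre_card_mulg.
have XY_comm : grmul (uline X) (uline Y) = grmul (uline Y) (uline X).
  by apply: P_central; apply: span_uline.
have := congr1 (fun c : ZG => c (z ^+ p)%g) (grexpMn_comm XY_comm p).
rewrite /= (grexp_fibre_card XY_fibre) grmulE.
under eq_bigr do rewrite !(grexp_fibre_card (uline_fibre_card _)) -PoszM.
rewrite -Posz_sum => -[XY_tuples].
have lt_p (A B : {set gT}) w : (#|[set x in A | x^-1 * w \in B]%g| < p)%N.
  by apply: leq_ltn_trans ltGp; apply: max_card.
rewrite !grmul_uline; congr Posz; apply/eqP.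
rewrite -(modn_small (lt_p _ _ _)) -[X in _ == X](modn_small (lt_p _ _ _)); apply/eqP.
rewrite -[in RHS]fibre_card_mulg.
have PXY := spanM (span_uline PX) (span_uline PY).
rewrite -(@span_tuples_congr _ _ _ _ _ z p_pr coGp PXY XY_fibre).
rewrite XY_tuples card_set_mulg_sum -[LHS]modn_summ -[RHS]modn_summ; congr (_ %% p)%N.
apply: eq_bigr => x _; rewrite -[RHS]modnMm !tuples_uline_congr // modnMm.
by rewrite !mem_setexp.
Qed.

End PrimeExponent.

(* The second clause is the multiplicativity of [sigma_map k] on basic sets,
   evaluated at [z ^+ k]. *)
Definition power_compatible k :=
  (forall X, X \in P -> setexpn X k \in P) /\
  (forall X Y z, X \in P -> Y \in P ->
     grmul (uline (setexpn X k)) (uline (setexpn Y k)) (z ^+ k)%g =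
     grmul (uline X) (uline Y) z).

Lemma setexpn1 X : setexpn X 1 = X.
Proof. by rewrite (eq_imset _ (@expg1 _)) imset_id. Qed.

Lemma setexpnM X a b : setexpn X (a * b) = setexpn (setexpn X a) b.
Proof. by rewrite -imset_comp; apply: eq_imset => x; rewrite /= expgM. Qed.

Lemma power_compatible1 : power_compatible 1.
Proof. by split=> [X|X Y z]; rewrite !setexpn1 ?expg1. Qed.

Lemma power_compatibleM a b :
  power_compatible a -> power_compatible b -> power_compatible (a * b).
Proof.
move=> [a_basic a_mul] [b_basic b_mul]; split=> [X PX|X Y z PX PY].
  by rewrite setexpnM; apply/b_basic/a_basic.
by rewrite !setexpnM expgM b_mul ?a_basic // a_mul.
Qed.

Lemma power_compatible_prime p : prime p -> (#|gT| < p)%N -> power_compatible p.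
Proof.
move=> p_pr ltGp; have coGp : coprime #|gT| p.
  by rewrite coprime_sym prime_coprime // gtnNdvd //; apply/card_gt0P; exists 1%g.
split=> [X|X Y z]; [exact: setexp_prime_basic | exact: setexp_prime_grmul].
Qed.

Lemma power_compatible_large_primes q : (0 < q)%N ->
  (forall l, prime l -> (l %| q)%N -> (#|gT| < l)%N) -> power_compatible q.
Proof.
move=> q_gt0 q_large; rewrite (prod_prime_decomp q_gt0) big_seq.
apply: big_ind => [|a b|[l e] /mem_prime_decomp[l_pr e_gt0 dvd_q]] /=.
- exact: power_compatible1.
- exact: power_compatibleM.
have l_pc : power_compatible l.
  apply: power_compatible_prime l_pr (q_large _ l_pr _).
  by apply: dvdn_trans dvd_q; apply: dvdn_exp.
elim: e {e_gt0 dvd_q} => [|e IHe]; first exact: power_compatible1.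
by rewrite expnS; apply: power_compatibleM.
Qed.

Section PowerCompatible.
Variable k : nat.
Hypotheses (coGk : coprime #|gT| k) (pc_k : power_compatible k).
Local Notation sigma := (sigma_map k).

Lemma setexpn_onto Y : Y \in P -> exists2 X, X \in P & setexpn X k = Y.
Proof.
suff im_P : [set setexpn X k | X : {set gT} in P] = P.
  by rewrite -{1}im_P => /imsetP[X PX ->]; exists X.
apply/eqP; rewrite eqEcard (card_imset _ (imset_inj (expg_inj_coprime coGk))) leqnn andbT.
by apply/subsetP=> _ /imsetP[X PX ->]; apply: pc_k.1.
Qed.

Lemma sigma_map_span a : inSpan P a -> inSpan P (sigma a).
Proof.
move: a; apply: span_ind => [|a b Pa Pb|X n PX].
- by rewrite sigma_map0; apply: span0.
- by rewrite sigma_mapD; apply: spanD.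
by rewrite sigma_mapMz sigma_map_uline //; apply/spanMz/span_uline/pc_k.1.
Qed.

Lemma sigma_map_onto b : inSpan P b -> exists2 a, inSpan P a & sigma a = b.
Proof.
move: b; apply: span_ind => [|_ _ [a Pa <-] [b Pb <-]|Y n /setexpn_onto[X PX <-]].
- by exists 0; rewrite ?sigma_map0 //; apply: span0.
- by exists (a + b); rewrite ?sigma_mapD //; apply: spanD.
exists (uline X *~ n); first by apply/spanMz/span_uline.
by rewrite sigma_mapMz sigma_map_uline.
Qed.

Lemma sigma_map_grmul_uline X Y : X \in P -> Y \in P ->
  sigma (grmul (uline X) (uline Y)) = grmul (sigma (uline X)) (sigma (uline Y)).
Proof.
move=> PX PY; apply/ffunP=> z; rewrite ffunE !sigma_map_uline //.
by rewrite -[in RHS](expgKV_coprime coGk z) pc_k.2.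
Qed.

Lemma sigma_map_grmul a b : inSpan P a -> inSpan P b ->
  sigma (grmul a b) = grmul (sigma a) (sigma b).
Proof.
move=> Pa Pb; move: a Pa; apply: span_ind => [|a1 a2 IH1 IH2|X m PX].
- by rewrite grmul0l sigma_map0 grmul0l.
- by rewrite grmulDl !sigma_mapD IH1 IH2 grmulDl.
rewrite grmulMzl !sigma_mapMz grmulMzl; congr (_ *~ m); move: b Pb.
apply: span_ind => [|b1 b2 IH1 IH2|Y n PY].
- by rewrite grmul0r sigma_map0 grmul0r.
- by rewrite grmulDr !sigma_mapD IH1 IH2 grmulDr.
by rewrite grmulMzr !sigma_mapMz grmulMzr sigma_map_grmul_uline.
Qed.

End PowerCompatible.

End SRing.
End GroupRing.

Unset Implicit Arguments.

Theorem theorem1p2 (gT : finGroupType) (P : {set {set gT}}) (m : int) :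
  is_Sring P -> central_Sring P -> coprime `|m|%N #|gT| ->
  (forall X, X \in P -> setexpz X m \in P) /\
  exists f : {ffun gT -> int} -> {ffun gT -> int},
    [/\ (forall X, X \in P -> f (uline X) = uline (setexpz X m)),
        (forall a, inSpan P a -> inSpan P (f a)),
        (forall a b, inSpan P a -> inSpan P b -> f a = f b -> a = b) &
        (forall b, inSpan P b -> exists2 a, inSpan P a & f a = b)] /\
    [/\ (forall a b, inSpan P a -> inSpan P b -> f (a + b) = f a + f b),
        (forall (k : int) a, inSpan P a -> f (a *~ k) = f a *~ k),
        (forall a b, inSpan P a -> inSpan P b -> f (grmul a b) = grmul (f a) (f b)) &
        f (grone gT) = grone gT].
Proof.
move=> P_Sring P_central co_m; rewrite coprime_sym in co_m.
have [e co_e m_e] := gexpz_expg co_m.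
have [q [q_gt0 q_e q_large]] := coprime_large_prime_factors co_e.
have co_q : coprime #|gT| q by rewrite /coprime -gcdn_modr q_e gcdn_modr.
have m_q (X : {set gT}) : setexpz X m = setexpn X q.
  apply: eq_imset => x; rewrite m_e -(expg_mod e (expg_cardT x)) -q_e.
  exact: expg_mod (expg_cardT x).
have pc_q := power_compatible_large_primes P_Sring P_central q_gt0 q_large.
split=> [X PX|]; first by rewrite m_q; apply: pc_q.1.
exists (sigma_map q); split; split.
- by move=> X _; rewrite m_q sigma_map_uline.
- exact: sigma_map_span pc_q.
- by move=> a b _ _; apply: sigma_map_inj.
- exact: sigma_map_onto pc_q.
- by move=> a b _ _; apply: sigma_mapD.
- by move=> k a _; apply: sigma_mapMz.
- exact: sigma_map_grmul pc_q.
exact: sigma_map_grone.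
Qed.
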